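(* Consider the discrete-time control system $x_{k+1}=f(x_k,u_k)$ with reward $r(x,u)=R-x^TQx$ under the standing assumptions (A1)–(A3) in the context. Let $\pi^\star$ be an optimal (feedback) policy for the discounted objective $\mathbf J^{\mathbf u}_\gamma$. Then there exists $\gamma^\star\in(0,1)$ such that for every $\gamma\in(\gamma^\star,1)$ the origin is an asymptotically stable equilibrium of the closed-loop system $x_{n+1}=f(x_n,\pi^\star(x_n))$.
   Context: System: $x_{k+1}=f(x_k,u_k)$, $x_k\in\mathbb R^n$, $u_k\in\mathcal U\subset\mathbb R^m$, origin an equilibrium; $\Psi(k,x_0,\mathbf u(k))$ is the state at time $k$ from $x_0$ under control sequence $\mathbf u$. (A1) $\|f(x,u)-f(y,w)\|\le L_x\|x-y\|+L_u\|u-w\|$. Reward $r(x,u)=R-x^TQx$, $R>0$ constant, $Q$ positive definite. For $\gamma\in(0,1)$: $\mathbf J^{\mathbf u}_\gamma(x_0)=\sum_{k\ge0}\gamma^k r(\Psi(k,x_0,\mathbf u(k)),\mathbf u(k))$, $V_\gamma(x_0)=\sup_{\mathbf u}\mathbf J^{\mathbf u}_\gamma(x_0)$. (A2) For every $x_0$ an optimal control sequence attaining $V_\gamma(x_0)$ exists. (A3) There is $a_V$ with $\frac{R}{1-\gamma}-V_\gamma(x)\le a_V\|x\|^2$ for all $\gamma\in(0,1)$, $x\in\mathbb R^n$. An optimal policy is a map $\pi^\star$ such that the closed-loop inputs $u_k=\pi^\star(x_k)$ attain $V_\gamma(x_0)$ for every $x_0$. Asymptotic stability of the origin for $x_{k+1}=f(x_k,\mathbf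 u(x_k))$: (1) for every $\epsilon>0$ there is $\delta>0$ such that $\|x_0\|<\delta$ implies $x_k$ is defined and $\|x_k\|<\epsilon$ for all $k$; (2) there is $\rho>0$ such that for every $\epsilon>0$ there is $N\in\mathbb N$ with $\|x_k\|<\epsilon$ for all $k\ge N$ whenever $\|x_0\|<\rho$. *)

From HB Require Import structures.
From mathcomp Require Import all_boot all_order all_algebra.
From mathcomp Require Import all_classical all_reals all_analysis.
Set Implicit Arguments. Unset Strict Implicit. Unset Printing Implicit Defensive.
Import Order.TTheory GRing.Theory Num.Theory.
Local Open Scope classical_set_scope.
Local Open Scope ring_scope.

Section ControlDefs.
Variables (R : realType) (n m : nat).

Definition enorm (x : 'cV[R]_n) : R := Num.sqrt (\sum_(i < n) x i ord0 ^+ 2).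

Definition quadf (Q : 'M[R]_n) (x : 'cV[R]_n) : R := (x^T *m Q *m x) ord0 ord0.

Definition posdef (Q : 'M[R]_n) : Prop := forall x : 'cV[R]_n, x != 0 -> 0 < quadf Q x.

Definition reward (Rc : R) (Q : 'M[R]_n) (x : 'cV[R]_n) (u : 'cV[R]_m) : R :=
  Rc - quadf Q x.

Fixpoint Psi (f : 'cV[R]_n -> 'cV[R]_m -> 'cV[R]_n) (k : nat) (x0 : 'cV[R]_n)
  (u : nat -> 'cV[R]_m) : 'cV[R]_n :=
  match k with
  | 0 => x0
  | k'.+1 => f (Psi f k' x0 u) (u k')
  end.

Definition admissible (U : set 'cV[R]_m) (u : nat -> 'cV[R]_m) : Prop :=
  forall k, U (u k).

(* J^u_gamma(x0) = sum_{k>=0} gamma^k r(Psi(k,x0,u), u_k), as the limit of the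
   partial sums in the extended reals (it always exists since r <= Rc). *)
Definition Jcost (f : 'cV[R]_n -> 'cV[R]_m -> 'cV[R]_n) (Rc : R) (Q : 'M[R]_n)
  (gamma : R) (x0 : 'cV[R]_n) (u : nat -> 'cV[R]_m) : \bar R :=
  lim ((fun N : nat => \sum_(k < N)
          ((gamma ^+ k * reward Rc Q (Psi f k x0 u) (u k))%:E)) @ \oo).

Definition Vval (f : 'cV[R]_n -> 'cV[R]_m -> 'cV[R]_n) (U : set 'cV[R]_m)
  (Rc : R) (Q : 'M[R]_n) (gamma : R) (x0 : 'cV[R]_n) : \bar R :=
  ereal_sup [set Jcost f Rc Q gamma x0 u | u in admissible U].

Fixpoint clx (f : 'cV[R]_n -> 'cV[R]_m -> 'cV[R]_n) (pi : 'cV[R]_n -> 'cV[R]_m)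
  (x0 : 'cV[R]_n) (k : nat) : 'cV[R]_n :=
  match k with
  | 0 => x0
  | k'.+1 => f (clx f pi x0 k') (pi (clx f pi x0 k'))
  end.

Definition optimal_policy (f : 'cV[R]_n -> 'cV[R]_m -> 'cV[R]_n) (U : set 'cV[R]_m)
  (Rc : R) (Q : 'M[R]_n) (gamma : R) (pi : 'cV[R]_n -> 'cV[R]_m) : Prop :=
  (forall x, U (pi x)) /\
  forall x0, Jcost f Rc Q gamma x0 (fun k => pi (clx f pi x0 k))
             = Vval f U Rc Q gamma x0.

Definition asymp_stable (f : 'cV[R]_n -> 'cV[R]_m -> 'cV[R]_n)
  (pi : 'cV[R]_n -> 'cV[R]_m) : Prop :=
  (forall eps : R, 0 < eps -> exists2 delta : R, 0 < delta &
     forall x0, enorm x0 < delta -> forall k, enorm (clx f pi x0 k) < eps) /\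
  (exists2 rho : R, 0 < rho &
     forall eps : R, 0 < eps -> exists N : nat,
       forall x0, enorm x0 < rho -> forall k, (N <= k)%N -> enorm (clx f pi x0 k) < eps).

End ControlDefs.

(* Write q(x) = x^T Q x >= lam |x|^2 and let W(x) = sum_j gamma^j q(x_j) be the
   quadratic part of the cost along the optimal closed loop.  Optimality turns (A3)
   into W(x) <= a |x|^2, and W(x) = q(x) + gamma W(x_1) with q(x) >= (lam / a) W(x),
   so gamma W(x_1) <= (1 - lam / a) W(x): W contracts with ratio (1 - lam / a) / gamma,
   which is < 1 for gamma close to 1.  Hence |x_k|^2 <= (a / lam) rho^k |x_0|^2.
   The argument is run on truncated sums, so no series ever has to converge. *)

From HB Require Import structures.
From mathcomp Require Import all_boot all_order all_algebra.
From mathcomp Require Import all_classical all_reals all_analysis.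
From mathcomp Require Import ring lra.
Set Implicit Arguments. Unset Strict Implicit. Unset Printing Implicit Defensive.
Import Order.TTheory GRing.Theory Num.Theory numFieldNormedType.Exports.
Local Open Scope classical_set_scope.
Local Open Scope ring_scope.

Section QuadraticForm.
Variables (R : realType) (n : nat) (Q : 'M[R]_n).

Lemma quadf0 : quadf Q 0 = 0.
Proof. by rewrite /quadf mulmx0 mxE. Qed.

Lemma quadfZ c x : quadf Q (c *: x) = c ^+ 2 * quadf Q x.
Proof. by rewrite /quadf !linearZ /= -!scalemxAl !mxE mulrA expr2. Qed.

Lemma posdef_quadf_ge0 : posdef Q -> forall x, 0 <= quadf Q x.
Proof.
move=> pQ x; have [->|x0] := eqVneq x 0; first by rewrite quadf0.
exact/ltW/pQ.
Qed.

Lemma quadf_trmx_continuous : continuous (fun v : 'rV[R]_n => quadf Q v^T).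
Proof.
have -> : (fun v : 'rV[R]_n => quadf Q v^T) =
    (fun v => \sum_j (\sum_i v ord0 i * Q i j) * v ord0 j).
  apply/funext => v; rewrite /quadf !mxE; apply: eq_bigr => j _.
  by rewrite !mxE; congr (_ * _); apply: eq_bigr => i _; rewrite !mxE.
have contM (T : topologicalType) (s t : T -> R) :
    continuous s -> continuous t -> continuous (fun v => s v * t v).
  by move=> s_cont t_cont v; apply: cvgM; [exact: s_cont | exact: t_cont].
apply: continuous_big => [|j _]; first exact: add_continuous.
apply: (contM); last exact: coord_continuous.
apply: continuous_big => [|i _]; first exact: add_continuous.
by apply: (contM); [exact: coord_continuous | exact: cst_continuous].
Qed.
End QuadraticForm.

Lemma mx_entry_le_norm (R : realType) p q (v : 'M[R]_(p, q)) i j : `|v i j| <= `|v|.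
Proof. by rewrite [leRHS]/Num.norm /= mx_normrE (le_bigmax _ _ (i, j)). Qed.

Lemma sqr_enorm_le_mx_norm (R : realType) n (x : 'cV[R]_n) :
  enorm x ^+ 2 <= n%:R * `|x^T| ^+ 2.
Proof.
rewrite /enorm sqr_sqrtr ?sumr_ge0 // => [|i _]; last exact: sqr_ge0.
rewrite mulr_natl -[X in _ *+ X]card_ord -sumr_const; apply: ler_sum => i _.
have -> : x i ord0 = x^T ord0 i by rewrite mxE.
by rewrite -real_normK ?num_real // lerXn2r ?nnegrE // mx_entry_le_norm.
Qed.

Lemma rV_unit_sphere_compact (R : realType) n :
  compact [set v : 'rV[R]_n | `|v| = 1].
Proof.
apply: bounded_closed_compact.
  by exists 1; split => [|M M1 v /= ->]; [exact: num_real | exact: ltW].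
have -> : [set v : 'rV[R]_n | `|v| = 1] = Num.norm @^-1` [set 1 : R] by [].
apply: preimage_closed; last exact: closed_eq.
by move=> v _; exact: norm_continuous.
Qed.

Lemma posdef_quadf_coercive (R : realType) n (Q : 'M[R]_n) : posdef Q ->
  exists2 lam : R, 0 < lam & forall x, lam * enorm x ^+ 2 <= quadf Q x.
Proof.
case: n Q => [|k] Q pQ.
  exists 1 => // x; rewrite /enorm big_ord0 sqrtr0 expr0n mulr0.
  exact: posdef_quadf_ge0.
pose S := [set v : 'rV[R]_k.+1 | `|v| = 1].
have S_neq0 : S !=set0.
  have one_neq0 : (const_mx 1 : 'rV[R]_k.+1) != 0.
    by apply/eqP => /matrixP /(_ ord0 ord0) /eqP; rewrite !mxE oner_eq0.
  by exists (`|const_mx 1 : 'rV[R]_k.+1|^-1 *: const_mx 1); rewrite /S /= normfZV.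
have [c /[!inE] c_unit c_min] :=
  EVT_min_rV S_neq0 (@rV_unit_sphere_compact R k.+1) (continuous_subspaceT (quadf_trmx_continuous (Q := Q))).
have min_gt0 : 0 < quadf Q c^T.
  apply: pQ; apply: contra_eqN c_unit => /eqP/(congr1 trmx).
  by rewrite trmxK trmx0 => ->; rewrite normr0 eq_sym oner_eq0.
exists (quadf Q c^T / k.+1%:R); first by rewrite divr_gt0.
move=> x; apply: le_trans (_ : quadf Q c^T * `|x^T| ^+ 2 <= _).
  rewrite mulrAC ler_pdivrMr // -mulrA ler_pM2l // mulrC.
  exact: sqr_enorm_le_mx_norm.
have [x0|xT_neq0] := eqVneq x^T 0.
  by rewrite x0 normr0 expr0n mulr0 -[x]trmxK x0 trmx0 quadf0.
have xT_gt0 : 0 < `|x^T| by rewrite normr_gt0.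
have := c_min (`|x^T|^-1 *: x^T); rewrite inE /S /= normfZV // => /(_ erefl).
by rewrite linearZ /= trmxK quadfZ exprVn ler_pdivlMl ?exprn_gt0 // mulrC.
Qed.

Section DiscountedSums.
Variables (R : realType) (g c : R) (q : nat -> R).
Hypotheses (g_ge0 : 0 <= g) (g_lt1 : g < 1) (q_ge0 : forall k, 0 <= q k).

Let S N := \sum_(k < N) g ^+ k * q k.

Lemma lim_discounted_sum :
  lim ((fun N => \sum_(k < N) ((g ^+ k * (c - q k))%:E)) @ \oo)
  = ((c / (1 - g))%:E - ereal_sup (range (fun N => (S N)%:E)))%E.
Proof.
have -> : (fun N => \sum_(k < N) ((g ^+ k * (c - q k))%:E)) =
    ((fun N => (series (geometric c g) N)%:E) \- (fun N => (S N)%:E))%E.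
  apply/funext => N /=; rewrite sumEFin -EFinB /series /= big_mkord -sumrB.
  by congr _%:E; apply: eq_bigr => k _; rewrite mulrBr mulrC.
apply: cvg_lim => //; apply: cvgeB.
- exact: fin_num_adde_defr.
- by apply/cvg_EFin/cvg_geometric_series; [exact: nearW | rewrite ger0_norm].
- apply: ereal_nondecreasing_cvgn => M N MN; rewrite lee_fin /S.
  rewrite -(subnKC MN) big_split_ord /= lerDl.
  by apply: sumr_ge0 => k _; rewrite mulr_ge0 ?exprn_ge0.
Qed.

Lemma discounted_sum_le (B : R) :
  ((c / (1 - g))%:E - lim ((fun N => \sum_(k < N) ((g ^+ k * (c - q k))%:E)) @ \oo)
    <= B%:E)%E ->
  forall N, S N <= B.
Proof.
rewrite lim_discounted_sum oppeB ?fin_num_adde_defr // addeA subee // add0e.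
by move=> supB N; rewrite -lee_fin; apply: le_trans supB; apply: ereal_sup_ubound; exists N.
Qed.
End DiscountedSums.

Section DiscountedCostDecay.
Variables (R : realType) (T : Type) (F : T -> T) (q w : T -> R) (g lam A : R).
Hypotheses (g_gt0 : 0 < g) (lam_gt0 : 0 < lam) (lam_leA : lam <= A).
Hypothesis q_lb : forall y, lam * w y <= q y.
Hypothesis cost_le : forall y N, \sum_(j < N) g ^+ j * q (iter j F y) <= A * w y.

Let cost y N := \sum_(j < N) g ^+ j * q (iter j F y).

Let A_gt0 : 0 < A. Proof. exact: lt_le_trans lam_leA. Qed.

Lemma discounted_costS y N : cost y N.+1 = q y + g * cost (F y) N.
Proof.
rewrite /cost big_ord_recl expr0 mul1r mulr_sumr; congr (_ + _).
by apply: eq_bigr => j _; rewrite exprS -mulrA iterSr.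
Qed.

Lemma discounted_cost_contract y N :
  g * cost (F y) N <= (1 - lam / A) * cost y N.+1.
Proof.
(* The stage cost dominates the fraction lam / A of the whole cost-to-go. *)
have : lam / A * cost y N.+1 <= q y.
  rewrite -mulrA mulrCA ler_pdivrMl //.
  apply: le_trans (ler_wpM2l (ltW lam_gt0) (cost_le y N.+1)) _.
  by rewrite mulrCA ler_pM2l.
have := discounted_costS y N; rewrite mulrBl mul1r; lra.
Qed.

Lemma discounted_cost_iter_le k y N :
  cost (iter k F y) N <= ((1 - lam / A) / g) ^+ k * (A * w y).
Proof.
elim: k N => [|k IH] N; first by rewrite expr0 mul1r; exact: cost_le.
have d_ge0 : 0 <= 1 - lam / A by rewrite subr_ge0 ler_pdivrMr // mul1r.
rewrite iterS exprS -mulrA.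
apply: le_trans (_ : (1 - lam / A) / g * cost (iter k F y) N.+1 <= _).
  by rewrite mulrAC ler_pdivlMr // mulrC; exact: discounted_cost_contract.
by apply: ler_wpM2l; [rewrite divr_ge0 // ltW | exact: IH].
Qed.

Lemma iter_geometric_decay k y :
  w (iter k F y) <= A / lam * ((1 - lam / A) / g) ^+ k * w y.
Proof.
rewrite -(ler_pM2l lam_gt0).
have -> : lam * (A / lam * ((1 - lam / A) / g) ^+ k * w y)
    = ((1 - lam / A) / g) ^+ k * (A * w y).
  by field; rewrite gt_eqF.
apply: le_trans (q_lb _) _.
by have := discounted_cost_iter_le k y 1; rewrite /cost big_ord1 expr0 mul1r.
Qed.
End DiscountedCostDecay.

Section ClosedLoop.
Variables (R : realType) (n m : nat).
Variables (f : 'cV[R]_n -> 'cV[R]_m -> 'cV[R]_n) (pi : 'cV[R]_n -> 'cV[R]_m).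

Lemma clx_iter x0 k : clx f pi x0 k = iter k (fun x => f x (pi x)) x0.
Proof. by elim: k => //= k ->. Qed.

Lemma Psi_clx x0 k : Psi f k x0 (fun j => pi (clx f pi x0 j)) = clx f pi x0 k.
Proof. by elim: k => //= k ->. Qed.

Lemma optimal_policy_cost_le U Rc Q (gamma aV : R) :
  posdef Q -> 0 < gamma < 1 -> optimal_policy f U Rc Q gamma pi ->
  (forall x, ((Rc / (1 - gamma))%:E - Vval f U Rc Q gamma x
              <= (aV * enorm x ^+ 2)%:E)%E) ->
  forall y N, \sum_(j < N) gamma ^+ j * quadf Q (clx f pi y j) <= aV * enorm y ^+ 2.
Proof.
move=> Qpos /andP[gamma_gt0 gamma_lt1] [_ pi_opt] V_gap y.
apply: (discounted_sum_le (c := Rc) (ltW gamma_gt0) gamma_lt1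
  (fun k => posdef_quadf_ge0 Qpos _)).
have := V_gap y; rewrite -pi_opt /Jcost.
suff -> : (fun N => \sum_(k < N) (gamma ^+ k * reward Rc Q
    (Psi f k y (fun j => pi (clx f pi y j))) (pi (clx f pi y k)))%:E)
  = (fun N => \sum_(k < N) (gamma ^+ k * (Rc - quadf Q (clx f pi y k)))%:E) by [].
by apply/funext => N; apply: eq_bigr => k _; rewrite /reward Psi_clx.
Qed.

Lemma asymp_stable_of_sqr_decay (c rho : R) : 1 <= c -> 0 <= rho < 1 ->
  (forall x0 k, enorm (clx f pi x0 k) ^+ 2 <= c * rho ^+ k * enorm x0 ^+ 2) ->
  asymp_stable f pi.
Proof.
move=> c_ge1 /andP[rho_ge0 rho_lt1] decay.
have enorm_ge0 (x : 'cV[R]_n) : 0 <= enorm x by exact: sqrtr_ge0.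
have c_gt0 : 0 < c by exact: lt_le_trans ltr01 c_ge1.
have sqr_bound_lt e x0 k : 0 < e -> c * rho ^+ k * enorm x0 ^+ 2 < e ^+ 2 ->
    enorm (clx f pi x0 k) < e.
  move=> e_gt0 lt_e; rewrite -(ltr_pXn2r (ltn0Sn 1)) ?nnegrE ?enorm_ge0 ?(ltW e_gt0) //.
  exact: le_lt_trans (decay x0 k) lt_e.
split=> [e e_gt0 | ].
  exists (e / c) => [|x0 x0_lt k]; first exact: divr_gt0.
  apply: sqr_bound_lt => //; rewrite ltr_pdivlMr // in x0_lt.
  apply: le_lt_trans (_ : (enorm x0 * c) ^+ 2 < _); last first.
    by rewrite ltr_pXn2r ?nnegrE ?mulr_ge0 ?enorm_ge0 ?(ltW c_gt0) ?(ltW e_gt0).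
  rewrite exprMn mulrC; apply: ler_wpM2l; first exact: sqr_ge0.
  have := exprn_ile1 k rho_ge0 (ltW rho_lt1); have := exprn_ge0 k rho_ge0; nra.
exists 1 => // e e_gt0.
have rho_norm_lt1 : `|rho| < 1 by rewrite ger0_norm.
have [N _ rho_N_small] := cvgr_dist_lt _ _ (cvg_expr rho_norm_lt1) _
  (divr_gt0 (exprn_gt0 2 e_gt0) c_gt0).
exists N => x0 x0_lt1 k N_le_k; apply: sqr_bound_lt => //.
have := rho_N_small N (leqnn N).
rewrite /= sub0r normrN ger0_norm ?exprn_ge0 // ltr_pdivlMr //.
have : rho ^+ k <= rho ^+ N by apply: ler_wiXn2l => //; exact: ltW.
have : enorm x0 ^+ 2 <= 1 by rewrite expr_le1 ?enorm_ge0 ?ltW.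
have := mulr_ge0 (ltW c_gt0) (exprn_ge0 k rho_ge0); nra.
Qed.
End ClosedLoop.

Theorem theorem1 (R : realType) (n m : nat)
  (f : 'cV[R]_n -> 'cV[R]_m -> 'cV[R]_n) (U : set 'cV[R]_m)
  (Rc : R) (Q : 'M[R]_n) :
  (* origin is an equilibrium *)
  (exists2 u0 : 'cV[R]_m, U u0 & f 0 u0 = 0) ->
  0 < Rc -> posdef Q ->
  (* (A1) Lipschitz continuity *)
  (exists Lx Lu : R, forall (x y : 'cV[R]_n) (u w : 'cV[R]_m), U u -> U w ->
     enorm (f x u - f y w) <= Lx * enorm (x - y) + Lu * enorm (u - w)) ->
  (* (A2) existence of optimal control sequences *)
  (forall gamma : R, 0 < gamma < 1 -> forall x0 : 'cV[R]_n,
     exists2 u : nat -> 'cV[R]_m, admissible U u &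
       Jcost f Rc Q gamma x0 u = Vval f U Rc Q gamma x0) ->
  (* (A3) *)
  (exists aV : R, forall gamma : R, 0 < gamma < 1 -> forall x : 'cV[R]_n,
     ((Rc / (1 - gamma))%:E - Vval f U Rc Q gamma x <= (aV * enorm x ^+ 2)%:E)%E) ->
  exists2 gstar : R, 0 < gstar < 1 &
    forall gamma : R, gstar < gamma < 1 ->
      forall pi : 'cV[R]_n -> 'cV[R]_m,
        optimal_policy f U Rc Q gamma pi -> asymp_stable f pi.
Proof.
move=> _ _ Qpos _ _ [aV V_gap].
have [lam lam_gt0 lam_le_quadf] := posdef_quadf_coercive Qpos.
pose A := Num.max aV lam.
have lam_leA : lam <= A by rewrite le_max lexx orbT.
have A_gt0 : 0 < A := lt_le_trans lam_gt0 lam_leA.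
set t := lam / A.
have t_gt0 : 0 < t by rewrite divr_gt0.
have t_le1 : t <= 1 by rewrite ler_pdivrMr // mul1r.
(* The contraction ratio (1 - t) / gamma is < 1 iff gamma > 1 - t; the midpoint
   1 - t / 2 stays positive even when t = 1. *)
exists (1 - t / 2); first by apply/andP; split; lra.
move=> gamma /andP[gstar_lt_gamma gamma_lt1] pi pi_opt.
have gamma_gt0 : 0 < gamma by lra.
have gamma01 : 0 < gamma < 1 by rewrite gamma_gt0.
have cost_le y N : \sum_(j < N) gamma ^+ j * quadf Q (iter j (fun x => f x (pi x)) y)
    <= A * enorm y ^+ 2.
  under eq_bigr do rewrite -clx_iter.
  apply: le_trans (optimal_policy_cost_le Qpos gamma01 pi_opt (V_gap _ gamma01) y N) _.
  by apply: ler_wpM2r; [exact: sqr_ge0 | rewrite le_max lexx].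
apply: (asymp_stable_of_sqr_decay (c := A / lam) (rho := (1 - t) / gamma)).
- by rewrite ler_pdivlMr // mul1r.
- by rewrite divr_ge0 ?subr_ge0 ?(ltW gamma_gt0) //= ltr_pdivrMr // mul1r; lra.
- move=> x0 k; rewrite clx_iter.
  exact: (iter_geometric_decay gamma_gt0 lam_gt0 lam_leA lam_le_quadf cost_le).
Qed.
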